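(* Let $n,k\in\mathbb{N}$ and let $\mathcal{C}$ be a class of finite graphs such that $\mathrm{wd}^\otimes_n(G)\le k$ for all $G\in\mathcal{C}$. The following are equivalent: (1) $\mathcal{C}$ is $\mathrm{MSO}_1$-orderable; (2) $\mathcal{C}$ has property $\mathsf{CUT}$; (3) there is $d\in\mathbb{N}$ such that every $G\in\mathcal{C}$ has a $\otimes$-decomposition $(H_v)_{v\in T}$ of height at most $n$ and width at most $k$ in which every vertex of $T$ has outdegree at most $d$; (4) $\mathcal{C}$ is finite (up to isomorphism).
   Context: A graph with ports in $[k]=\{0,\dots,k-1\}$ is a graph with $\pi:V\to[k]$; for $R\subseteq[k]\times[k]$, $G\otimes_R H$ is the disjoint union plus all edges $\{x,y\}$ with $x,y$ in different operands, $x$ of label $a$, $y$ of label $b$, $(a,b)\in R$ (associative, commutative); $\mathrm{Del}$ deletes labels. A $\otimes$-decomposition of $G=\langle V,E\rangle$ of width $k$ is a family $(H_v)_{v\in T}$ of graphs with ports in $[k]$ indexed by a rooted tree $T$ such that: $H_{\mathrm{root}}$ is $G$ with some labelling; $H_v$ has exactly one vertex for each leaf $v$; and for every internal node $v$ with children $u_0,\dots,u_{d-1}$ there is $R_v\subseteq[k]\times[k]$ with $\mathrm{Del}(H_v)=\mathrm{Del}(H_{u_0}\otimes_{R_v}\cdots\otimes_{R_v}H_{u_{d-1}})$ (labels of $H_v$ and its children unrelated). Its height is the height of $T$. $\mathrm{wd}^\otimes_n(G)$ is the least $k$ such that $G$ has a $\otimes$-decomposition of width $\le k$ and height $\le n$.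 $\mathrm{Cut}(G,k)$ is the maximal $m$ with $G\cong\mathrm{Del}(H_0\otimes_R\cdots\otimes_R H_{m-1})$ for nonempty $H_i$ with ports in $[k]$ and some $R$; $\mathcal{C}$ has $\mathsf{CUT}$ if there is $f$ with $\mathrm{Cut}(G,k)\le f(k)$ for all $G\in\mathcal{C}$, $k$. $\mathcal{C}$ is $\mathrm{MSO}_1$-orderable if there is an MSO-formula $\varphi(x,y;Z_0,\dots,Z_{m-1})$ such that for every nonempty $G\in\mathcal{C}$ there are vertex sets $P_i$ with $\{(a,b):\lfloor G\rfloor\models\varphi(a,b;\bar P)\}$ a linear order on the vertices, where $\lfloor G\rfloor$ is the structure with universe $V$ and edge relation. *)

From mathcomp Require Import all_boot.
Set Implicit Arguments. Unset Strict Implicit. Unset Printing Implicit Defensive.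

Record graph := Graph {
  gV : finType;
  gE : rel gV;
  gE_sym : symmetric gE;
  gE_irr : irreflexive gE }.

Definition iso (G1 G2 : graph) : Prop :=
  exists f : gV G1 -> gV G2, bijective f /\ forall x y, gE (f x) (f y) = gE x y.

(** * Graphs with ports in [k] = {0,..,k-1};  Del = pg (forget labels) *)
Record pgraph (k : nat) := PGraph { pg : graph; plab : gV pg -> 'I_k }.

Definition empty_rel : rel void := fun _ _ => false.
Lemma empty_sym : symmetric empty_rel. Proof. by []. Qed.
Lemma empty_irr : irreflexive empty_rel. Proof. by []. Qed.
Definition empty_pgraph k : pgraph k :=
  @PGraph k (Graph empty_sym empty_irr) (fun v : void => match v with end).

Section Prod.
Variables (k : nat) (R : rel 'I_k) (G H : pgraph k).
Definition prod_V : finType := (gV (pg G) + gV (pg H))%type.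
Definition prod_lab (x : prod_V) : 'I_k :=
  match x with inl a => plab a | inr b => plab b end.
Definition prod_E : rel prod_V := fun x y =>
  match x, y with
  | inl a, inl b => gE a b
  | inr a, inr b => gE a b
  | _, _ => R (prod_lab x) (prod_lab y) || R (prod_lab y) (prod_lab x)
  end.
Lemma prod_sym : symmetric prod_E.
Proof. move=> [a|a] [b|b] /=; [exact: gE_sym | exact: orbC | exact: orbC | exact: gE_sym]. Qed.
Lemma prod_irr : irreflexive prod_E.
Proof. move=> [a|a] /=; exact: gE_irr. Qed.
Definition pprod : pgraph k := @PGraph k (Graph prod_sym prod_irr) prod_lab.
End Prod.

Definition pprodn k (R : rel 'I_k) (Hs : seq (pgraph k)) : pgraph k :=
  foldr (pprod R) (empty_pgraph k) Hs.

Fixpoint allP (T : Type) (P : T -> Prop) (s : seq T) : Prop :=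
  match s with [::] => True | x :: s' => P x /\ allP P s' end.

Inductive dtree (k : nat) : Type := DNode of pgraph k & seq (dtree k).

Definition droot k (t : dtree k) : pgraph k := let: DNode H _ := t in H.

(** validity: leaves carry exactly one vertex; at an internal node v with
    children u_0..u_{d-1} there is R with Del(H_v) = Del(H_u0 (x)_R ... (x)_R H_u(d-1))
    (equality of unlabelled graphs, up to isomorphism) *)
Fixpoint dvalid k (t : dtree k) : Prop :=
  match t with
  | DNode H ts =>
      (if ts is [::] then #|gV (pg H)| = 1
       else exists R : rel 'I_k, iso (pg H) (pg (pprodn R (map (@droot k) ts))))
      /\ (fix go (l : seq (dtree k)) : Prop :=
            match l with [::] => True | t' :: l' => dvalid t' /\ go l' end) ts
  end.

(** height of the tree (a single node has height 0) *)
Fixpoint dheight k (t : dtree k) : nat :=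
  match t with
  | DNode _ ts =>
      (fix go (l : seq (dtree k)) : nat :=
         match l with [::] => 0 | t' :: l' => maxn (dheight t').+1 (go l') end) ts
  end.

Fixpoint doutdeg_le k (d : nat) (t : dtree k) : Prop :=
  match t with
  | DNode _ ts =>
      size ts <= d /\
      (fix go (l : seq (dtree k)) : Prop :=
         match l with [::] => True | t' :: l' => doutdeg_le d t' /\ go l' end) ts
  end.

Definition is_decomp (G : graph) k (t : dtree k) : Prop :=
  dvalid t /\ iso (pg (droot t)) G.

Definition wd_le (n : nat) (G : graph) (k : nat) : Prop :=
  exists k', k' <= k /\ exists t : dtree k', is_decomp G t /\ dheight t <= n.

Definition graph_class := graph -> Prop.

Definition bounded_outdeg_decomps (n k : nat) (C : graph_class) : Prop :=
  exists d : nat, forall G, C G ->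
    exists k', k' <= k /\
      exists t : dtree k', [/\ is_decomp G t, dheight t <= n & doutdeg_le d t].

Definition cut_witness (G : graph) (k m : nat) : Prop :=
  exists (Hs : seq (pgraph k)) (R : rel 'I_k),
    [/\ size Hs = m, allP (fun H => 0 < #|gV (pg H)|) Hs & iso G (pg (pprodn R Hs))].

(** property CUT : Cut(G,k) <= f(k), i.e. every m witnessing a cut is <= f k *)
Definition has_CUT (C : graph_class) : Prop :=
  exists f : nat -> nat, forall G, C G -> forall k m, cut_witness G k m -> m <= f k.

Definition finite_upto_iso (C : graph_class) : Prop :=
  exists (m : nat) (F : nat -> graph), forall G, C G -> exists2 i, i < m & iso G (F i).

Inductive mso : Type :=
  | MEdge of nat & nat
  | MEq of nat & nat
  | MIn of nat & nat         (* x_i \in X_j *)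
  | MNot of mso
  | MAnd of mso & mso
  | MEx1 of nat & mso
  | MEx2 of nat & mso.       (* exists X_j (vertex set) *)

Fixpoint sat (G : graph) (phi : mso) (v1 : nat -> gV G) (v2 : nat -> {set gV G})
    : Prop :=
  match phi with
  | MEdge i j => gE (v1 i) (v1 j)
  | MEq i j => v1 i = v1 j
  | MIn i j => v1 i \in v2 j
  | MNot f => ~ sat f v1 v2
  | MAnd f g => sat f v1 v2 /\ sat g v1 v2
  | MEx1 i f => exists a, sat f (fun l => if l == i then a else v1 l) v2
  | MEx2 j f => exists A, sat f v1 (fun l => if l == j then A else v2 l)
  end.

Definition linear_order (T : Type) (r : T -> T -> Prop) : Prop :=
  [/\ forall a, r a a,
      forall a b, r a b -> r b a -> a = b,
      forall a b c, r a b -> r b c -> r a c &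
      forall a b, r a b \/ r b a].

(** MSO_1-orderable: phi(x,y; Z_0,...) with x = first-order variable 0,
    y = first-order variable 1 (other first-order variables also read as y),
    Z_j = set variable j, instantiated by vertex sets P j. *)
Definition mso_orderable (C : graph_class) : Prop :=
  exists phi : mso, forall G, C G -> 0 < #|gV G| ->
    exists P : nat -> {set gV G},
      linear_order (fun a b => sat phi (fun i => if i == 0 then a else b) P).

(** (4) implies the others directly: a size bound [B] bounds cuts and
    outdegrees, and the vertices can be ordered by an enumeration given by
    singleton parameter sets.  (3) -> (4) since outdegree [d] and height [n]
    allow at most [d ^ n] vertices.  The two hard directions go through the
    "flat" decompositions [hdec], which keep, inside one graph, the nested
    block structure of a decomposition tree:
    - (1) -> (4): a large decomposable graph with a colouring by [t] colours
      has a non-trivial colour-preserving automorphism ([small_or_coloured_aut]: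
      either a part is large, or two parts are isomorphic and can be swapped).
      Colouring by membership in the parameters of an MSO-definable order, such
      an automorphism would preserve the order, hence be the identity.
    - (2) -> (4): a cut of a part of a labelled cut refines to a cut of the
      whole graph ([cut_in_part]), so bounded cuts bound every level of the
      decomposition, hence the size ([hdec_size_bound]). *)

From Pilot Require Import Defs.
From mathcomp Require Import all_boot.
From mathcomp Require Import zify.
From Stdlib Require Import Classical FunctionalExtensionality ClassicalEpsilon.
Set Implicit Arguments. Unset Strict Implicit. Unset Printing Implicit Defensive.

Notation allP := Defs.allP.

Lemma iso_sym G1 G2 : iso G1 G2 -> iso G2 G1.
Proof.
case=> f [[g fK gK] fE]; exists g; split; first by exists f.
by move=> x y; rewrite -fE !gK.
Qed.

Lemma iso_card G1 G2 : iso G1 G2 -> #|gV G1| = #|gV G2|.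
Proof. by case=> f [bf _]; apply: bij_eq_card bf. Qed.

Lemma card_pprodn k (R : rel 'I_k) Hs :
  #|gV (pg (pprodn R Hs))| = sumn (map (fun H => #|gV (pg H)|) Hs).
Proof. by elim: Hs => [|H Hs IH] /=; rewrite ?card_void // card_sum IH. Qed.

Lemma allP_In (T : Type) (P : T -> Prop) (l : seq T) :
  allP P l <-> forall x, List.In x l -> P x.
Proof.
elim: l => [|a l IH] //=; split=> [[Pa /IH Pl] x [<-|xl] | Pl]; auto.
by split; [apply: Pl; left | apply/IH => x xl; apply: Pl; right].
Qed.

Lemma In_map (A B : Type) (f : A -> B) (l : seq A) y :
  List.In y (map f l) -> exists2 x, List.In x l & y = f x.
Proof.
elim: l => [|a l IH] //= [<-|/IH [x xl ->]]; first by exists a; [left|].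
by exists x; [right|].
Qed.
Arguments In_map {A B f l y}.

Lemma In_mem (T : eqType) (x : T) (l : seq T) : List.In x l -> x \in l.
Proof. by elim: l => [|a l IH] //= [->|/IH xl]; rewrite inE ?eqxx ?xl ?orbT. Qed.

Lemma sumn_le_mul (A : Type) (f : A -> nat) b (l : seq A) :
  (forall x, List.In x l -> f x <= b) -> sumn (map f l) <= size l * b.
Proof.
elim: l => [|a l IH] //= fb; rewrite mulSn leq_add ?fb //; first by left.
by apply: IH => x xl; apply: fb; right.
Qed.

Lemma size_le_sumn (A : Type) (f : A -> nat) (l : seq A) :
  (forall x, List.In x l -> 0 < f x) -> size l <= sumn (map f l).
Proof.
elim: l => [|a l IH] //= fpos; rewrite -add1n leq_add ?fpos //; first by left.
by apply: IH => x xl; apply: fpos; right.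
Qed.

Lemma le_sumn (A : Type) (f : A -> nat) (l : seq A) x :
  List.In x l -> f x <= sumn (map f l).
Proof.
elim: l => [|a l IH] //= [<-|xl]; first exact: leq_addr.
exact: leq_trans (IH xl) (leq_addl _ _).
Qed.

Section Trees.
Variable k : nat.
Implicit Types (t : dtree k) (ts : seq (dtree k)) (H : pgraph k).

Fixpoint dtree_ind' (P : dtree k -> Prop)
    (IH : forall H ts, (forall t, List.In t ts -> P t) -> P (DNode H ts)) t : P t :=
  let: DNode H ts := t in
  IH H ts (proj1 (allP_In P ts) ((fix go (l : seq (dtree k)) : allP P l :=
     match l with [::] => I | t' :: l' => conj (dtree_ind' IH t') (go l') end) ts)).

Lemma dvalidE H ts : dvalid (DNode H ts) <->
  (if ts is [::] then #|gV (pg H)| = 1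
   else exists R : rel 'I_k, iso (pg H) (pg (pprodn R (map (@droot k) ts))))
  /\ forall t, List.In t ts -> dvalid t.
Proof.
rewrite -allP_In /=; split=> -[h1 h2]; split=> //; move: h2 {h1};
  by elim: ts => //= t ts IH [? ?]; split=> //; apply: IH.
Qed.

Lemma doutdegE d H ts : doutdeg_le d (DNode H ts) <->
  size ts <= d /\ forall t, List.In t ts -> doutdeg_le d t.
Proof.
rewrite -allP_In /=; split=> -[h1 h2]; split=> //; move: h2 {h1};
  by elim: ts => //= t ts IH [? ?]; split=> //; apply: IH.
Qed.

Lemma dheight_child H ts t : List.In t ts -> dheight t < dheight (DNode H ts).
Proof.
elim: ts => [|t' ts IH] //= [<-|tts]; first exact: leq_maxl.
exact: leq_trans (IH tts) (leq_maxr _ _).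
Qed.

Lemma dheight_node H t ts : exists m, dheight (DNode H (t :: ts)) = m.+1 /\
  forall t', List.In t' (t :: ts) -> dheight t' <= m.
Proof.
exists (dheight (DNode H (t :: ts))).-1.
have pos : 0 < dheight (DNode H (t :: ts)).
  exact: leq_ltn_trans (leq0n _) (@dheight_child H (t :: ts) t (or_introl erefl)).
split=> [|t' /(dheight_child H) lt]; first by rewrite prednK.
by rewrite -ltnS prednK.
Qed.

Lemma card_node H t ts R :
  iso (pg H) (pg (pprodn R (map (@droot k) (t :: ts)))) ->
  #|gV (pg H)| = sumn (map (fun t => #|gV (pg (droot t))|) (t :: ts)).
Proof. by move/iso_card->; rewrite card_pprodn -map_comp. Qed.

Lemma valid_pos t : dvalid t -> 0 < #|gV (pg (droot t))|.
Proof.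
elim/dtree_ind': t => H [|t ts] IH /dvalidE [hH vts] /=; first by rewrite hH.
case: hH => R /card_node -> /=.
exact: leq_trans (IH t (or_introl erefl) (vts t (or_introl erefl))) (leq_addr _ _).
Qed.

Lemma doutdeg_mono d d' t : d <= d' -> doutdeg_le d t -> doutdeg_le d' t.
Proof.
move=> le; elim/dtree_ind': t => H ts IH /doutdegE [hs hts]; apply/doutdegE.
by split=> [|t tts]; [apply: leq_trans le | apply: IH (hts t tts)].
Qed.

(** Every node of a valid tree has at most as many children as the root has
    vertices, since all leaves are distinct vertices. *)
Lemma valid_outdeg t : dvalid t -> doutdeg_le #|gV (pg (droot t))| t.
Proof.
elim/dtree_ind': t => H ts IH /dvalidE [hH vts].
change (doutdeg_le #|gV (pg H)| (DNode H ts)); apply/doutdegE.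
case: ts IH hH vts => [|t ts] IH hH vts; first by split.
case: hH => R /card_node ->; split.
  by apply: size_le_sumn => t' /vts /valid_pos.
move=> t' t'ts; apply: doutdeg_mono (IH t' t'ts (vts t' t'ts)).
exact: (le_sumn (fun t => #|gV (pg (droot t))|) t'ts).
Qed.

Lemma valid_size_bound d t :
  dvalid t -> doutdeg_le d t -> #|gV (pg (droot t))| <= d ^ dheight t.
Proof.
elim/dtree_ind': t => H ts IH /dvalidE [hH vts] /doutdegE [hs ots].
change (#|gV (pg H)| <= d ^ dheight (DNode H ts)).
case: ts IH hH vts hs ots => [|t ts] IH hH vts hs ots; first by rewrite hH.
have [m [-> hm]] := dheight_node H t ts.
case: hH => R /card_node ->; rewrite expnS.
apply: leq_trans (leq_mul hs (leqnn _)).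
apply: sumn_le_mul => t' t'ts; apply: leq_trans (IH t' t'ts (vts t' t'ts) (ots t' t'ts)) _.
by rewrite leq_pexp2l ?hm //; apply: leq_trans hs.
Qed.

End Trees.

(** Classes of bounded size are finite up to isomorphism: every graph on at
    most [B] vertices is isomorphic to one coded by a size [N <= B] and an
    adjacency table on ['I_N]. *)
Definition code_rel N (e : {ffun 'I_N * 'I_N -> bool}) : rel 'I_N :=
  fun x y => (x != y) && (e (x, y) || e (y, x)).
Lemma code_rel_sym N e : symmetric (@code_rel N e).
Proof. by move=> x y; rewrite /code_rel eq_sym orbC. Qed.
Lemma code_rel_irr N e : irreflexive (@code_rel N e).
Proof. by move=> x; rewrite /code_rel eqxx. Qed.
Definition code_graph N e := Graph (@code_rel_sym N e) (@code_rel_irr N e).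

Definition graph_code (B : nat) := {N : 'I_B.+1 & {ffun 'I_N * 'I_N -> bool}}.

Lemma bounded_size_finite (C : graph_class) B :
  (forall G, C G -> #|gV G| <= B) -> finite_upto_iso C.
Proof.
move=> HB; pose L := enum (Finite.clone _ (graph_code B)).
pose c0 : graph_code B := existT _ ord0 [ffun _ => false].
exists (size L), (fun i => code_graph (tagged (nth c0 L i))) => G /HB ltN.
pose e : {ffun 'I_#|gV G| * 'I_#|gV G| -> bool} :=
  [ffun p => gE (enum_val p.1) (enum_val p.2)].
pose c : graph_code B := existT _ (Ordinal (ltN : #|gV G| < B.+1)) e.
exists (index c L); first by rewrite index_mem mem_enum.
rewrite /= nth_index ?mem_enum //=; exists enum_rank; split; first exact: enum_rank_bij.
move=> x y /=; rewrite /code_rel /= !ffunE /= !enum_rankK (inj_eq enum_rank_inj).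
by case: eqP => [->|_]; rewrite ?gE_irr // (gE_sym y x) orbb.
Qed.

Lemma finite_size_bound C : finite_upto_iso C -> exists B, forall G, C G -> #|gV G| <= B.
Proof.
case=> m [F HF]; exists (\max_(i < m) #|gV (F i)|) => G /HF [i lt /iso_card ->].
exact: (leq_bigmax (Ordinal lt)).
Qed.

(** (4) -> (2): a cut into [m] nonempty parts needs at least [m] vertices. *)
Lemma finite_CUT C : finite_upto_iso C -> has_CUT C.
Proof.
move=> /finite_size_bound [B HB]; exists (fun _ => B) => G CG k m [Hs [R [<- ne /iso_card e]]].
apply: leq_trans (HB _ CG); rewrite e card_pprodn; apply: size_le_sumn.
by move/allP_In: ne.
Qed.

(** (4) -> (3): the outdegree of any decomposition is at most the size. *)
Lemma finite_outdeg n k C :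
  (forall G, C G -> wd_le n G k) -> finite_upto_iso C -> bounded_outdeg_decomps n k C.
Proof.
move=> Hwd /finite_size_bound [B HB]; exists B => G CG.
have [k' [le [t [[vt isot] ht]]]] := Hwd G CG.
exists k'; split => //; exists t; split => //.
by apply: doutdeg_mono (valid_outdeg vt); rewrite (iso_card isot) HB.
Qed.

Lemma outdeg_finite n k C : bounded_outdeg_decomps n k C -> finite_upto_iso C.
Proof.
case=> d Hd; apply: (@bounded_size_finite _ (d.+1 ^ n)) => G /Hd [k' [_ [t [[vt isot] ht od]]]].
rewrite -(iso_card isot); apply: leq_trans (valid_size_bound vt (doutdeg_mono (leqnSn d) od)) _.
by rewrite leq_pexp2l.
Qed.

(** (4) -> (1): with at most [B] vertices, a linear order is defined by the
    formula "x lies in some Z_i and y in some Z_j with i <= j < B", the sets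
    Z_i being the singletons of an enumeration of the vertices. *)
Definition MOr a b := MNot (MAnd (MNot a) (MNot b)).
Definition MFalse := MNot (MEq 0 0).
Definition bigMOr (F : nat -> mso) (l : seq nat) := foldr (fun j acc => MOr (F j) acc) MFalse l.

Lemma sat_bigMOr G F l v1 v2 :
  @sat G (bigMOr F l) v1 v2 <-> exists2 j, j \in l & sat (F j) v1 v2.
Proof.
elim: l => [|j l IH] /=; first by split => [[]|[]].
split=> [nor|[j'] ]; last first.
  by rewrite inE => /orP [/eqP ->|jl] h [h1 h2]; [apply: h1 | apply/h2/IH; exists j'].
have [h|h] := classic (sat (F j) v1 v2); first by exists j; rewrite ?mem_head.
have [/IH [j' jl h']|h2] := classic (sat (bigMOr F l) v1 v2); last by case: nor.
by exists j'; rewrite // inE jl orbT.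
Qed.

Definition index_order B :=
  bigMOr (fun i => bigMOr (fun j => MAnd (MIn 0 i) (MIn 1 j)) (iota i (B - i))) (iota 0 B).

Lemma sat_index_order G B v1 v2 : @sat G (index_order B) v1 v2 <->
  exists i j, [/\ i <= j, j < B, v1 0 \in v2 i & v1 1 \in v2 j].
Proof.
rewrite /index_order sat_bigMOr; split.
- case=> i; rewrite mem_iota add0n => /andP[_ iB] /sat_bigMOr [j].
  by rewrite mem_iota subnKC ?(ltnW iB) // => /andP [ij jB] [h1 h2]; exists i, j.
- case=> i [j [ij jB h1 h2]]; have iB := leq_ltn_trans ij jB.
  exists i; first by rewrite mem_iota add0n iB.
  by apply/sat_bigMOr; exists j; rewrite // mem_iota subnKC ?ij // ltnW.
Qed.

Lemma finite_mso C : finite_upto_iso C -> mso_orderable C.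
Proof.
case/finite_size_bound => B HB; exists (index_order B) => G CG _.
exists (fun i => [set x : gV G | enum_rank x == i :> nat]).
set r := fun a b => _.
have rE a b : r a b <-> enum_rank a <= enum_rank b.
  rewrite /r sat_index_order /=; split=> [[i [j [ij _]]]|le].
    by rewrite !inE => /eqP -> /eqP ->.
  by exists (enum_rank a), (enum_rank b); rewrite !inE (leq_trans (ltn_ord _) (HB _ CG)).
split=> [a|a b /rE h1 /rE h2|a b c /rE h1 /rE h2|a b]; rewrite ?rE //.
- by apply/enum_rank_inj/val_inj/eqP; rewrite eqn_leq h1.
- exact: leq_trans h2.
- by case: (leqP (enum_rank a) (enum_rank b)) => h; [left | right; apply: ltnW].
Qed.

(** A vertex set [S] is split into
    blocks by a map [idx]; the edges between distinct blocks must be those of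
    a product, i.e. determined by labels [lab] below [kb] and a relation [R].
    [hdec h S] says that [S] can be split recursively in this way down to
    singletons within [h] levels: it forgets the trees but keeps their shape. *)
Section FlatDecomposition.
Variables (G : graph) (kb : nat).
Local Notation V := (gV G).

Definition labelled_cut (T : eqType) (idx : V -> T) (lab : V -> nat)
    (R : nat -> nat -> bool) (S : {set V}) :=
  forall x y, x \in S -> y \in S -> idx x != idx y ->
    gE x y = R (lab x) (lab y) || R (lab y) (lab x).

Definition block (T : eqType) (idx : V -> T) (S : {set V}) x :=
  [set y in S | idx y == idx x].

Fixpoint hdec (h : nat) (S : {set V}) : Prop :=
  match h with
  | 0 => #|S| = 1
  | h'.+1 => #|S| = 1 \/ exists (idx : V -> nat) (lab : V -> nat) (R : nat -> nat -> bool),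
      [/\ forall x, x \in S -> lab x < kb, labelled_cut idx lab R S
        & forall x, x \in S -> hdec h' (block idx S x)]
  end.

Lemma hdec_le h h' S : h <= h' -> hdec h S -> hdec h' S.
Proof.
elim: h h' S => [|h IH] [|h'] S //= hh'; first by left.
case=> [|[idx [lab [R [hl cut hb]]]]]; first by left.
by right; exists idx, lab, R; split=> // x xS; apply: IH (hb x xS).
Qed.

End FlatDecomposition.

Lemma hdec_emb (G1 G2 : graph) kb (f : gV G1 -> gV G2) :
  injective f -> (forall x y, gE (f x) (f y) = gE x y) ->
  forall h S, hdec kb h S -> hdec kb h (f @: S).
Proof.
move=> inj fE h; elim: h => [|h IH] S /=; first by rewrite card_imset.
case=> [e|[idx [lab [R [hl cut hb]]]]]; first by left; rewrite card_imset.
have pick_f x : [pick z | f z == f x] = Some x.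
  by case: pickP => [z /eqP/inj -> //|/(_ x)]; rewrite eqxx.
pose pull (g : gV G1 -> nat) y := if [pick z | f z == y] is Some z then g z else 0.
right; exists (pull idx), (pull lab), R; split.
- by move=> _ /imsetP [x xS ->]; rewrite /pull pick_f hl.
- by move=> _ _ /imsetP [x xS ->] /imsetP [y yS ->]; rewrite /pull !pick_f fE; apply: cut.
- move=> _ /imsetP [x xS ->].
  have -> : block (pull idx) (f @: S) (f x) = f @: block idx S x.
    apply/setP => y; rewrite !inE {2}/pull pick_f; apply/andP/imsetP.
      by case=> /imsetP [z zS ->]; rewrite /pull pick_f => e; exists z; rewrite // inE zS.
    by case=> z; rewrite inE => /andP [zS e] ->; rewrite imset_f // /pull pick_f.
  exact: IH (hb x xS).
Qed.

Lemma hdec_iso (G1 G2 : graph) kb h :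
  iso G1 G2 -> hdec kb h [set: gV G1] -> hdec kb h [set: gV G2].
Proof.
case=> f [bf fE] /(hdec_emb (bij_inj bf) fE); congr hdec.
by apply/setP => y; rewrite !inE; case: bf => g fK gK; rewrite -(gK y) imset_f.
Qed.

Fixpoint factor k (R : rel 'I_k) (Hs : seq (pgraph k)) : gV (pg (pprodn R Hs)) -> nat :=
  match Hs as Hs0 return gV (pg (pprodn R Hs0)) -> nat with
  | [::] => fun _ => 0
  | H :: Hs' => fun u : (gV (pg H) + gV (pg (pprodn R Hs')))%type =>
      if u is inr z then (@factor k R Hs' z).+1 else 0
  end.

(** [R] read as a relation on [nat], false outside ['I_k]. *)
Definition nat_rel k (R : rel 'I_k) : nat -> nat -> bool := fun a b =>
  if insub a is Some a' then (if insub b is Some b' then R a' b' else false) else false.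

Lemma nat_relE k (R : rel 'I_k) (a b : 'I_k) : nat_rel R a b = R a b.
Proof. by rewrite /nat_rel !valK. Qed.

Lemma factor_cut k (R : rel 'I_k) Hs (u w : gV (pg (pprodn R Hs))) :
  factor u != factor w -> gE u w = R (plab u) (plab w) || R (plab w) (plab u).
Proof.
elim: Hs u w => [|H Hs IH] /= u w; first by case: u.
by case: u => [a|z]; case: w => [b|z'] //=; rewrite eqSS; apply: IH.
Qed.

(** The blocks of the factor partition are copies of the factors. *)
Lemma factor_block k kb h (R : rel 'I_k) Hs :
  (forall H, List.In H Hs -> hdec kb h [set: gV (pg H)]) ->
  forall u : gV (pg (pprodn R Hs)), hdec kb h (block (@factor k R Hs) [set: _] u).
Proof.
elim: Hs => [|H Hs IH] hHs /=; first by case.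
case=> [a|z].
- have -> : block (@factor k R (H :: Hs)) [set: _] (inl a) = inl @: [set: gV (pg H)].
    apply/setP => -[b|z]; rewrite !inE /=; first by rewrite imset_f ?inE.
    by apply/esym/negbTE/imsetP => -[b _].
  by apply: hdec_emb (hHs H (or_introl erefl)) => // x y [].
- have -> : block (@factor k R (H :: Hs)) [set: _] (inr z) =
            inr @: block (@factor k R Hs) [set: _] z.
    apply/setP => -[b|z']; rewrite !inE /=; first by apply/esym/negbTE/imsetP => -[b' _].
    rewrite eqSS; apply/idP/imsetP => [e|[z'' hz [e]]]; first by exists z'; rewrite ?inE.
    by move: hz; rewrite e !inE.
  apply: hdec_emb (IH _ z) => //; first by move=> x y [].
  by move=> H' H'Hs; apply: hHs; right.
Qed.

Lemma pprodn_hdec k kb h (R : rel 'I_k) Hs : k <= kb ->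
  (forall H, List.In H Hs -> hdec kb h [set: gV (pg H)]) ->
  hdec kb h.+1 [set: gV (pg (pprodn R Hs))].
Proof.
move=> le hHs; right; exists (@factor k R Hs), (fun u => plab u : nat), (nat_rel R); split.
- by move=> x _; apply: leq_trans (ltn_ord _) le.
- by move=> x y _ _ ne; rewrite !nat_relE; apply: factor_cut.
- by move=> x _; apply: factor_block.
Qed.

Lemma tree_hdec k' kb (t : dtree k') : k' <= kb ->
  dvalid t -> hdec kb (dheight t) [set: gV (pg (droot t))].
Proof.
move=> le; elim/dtree_ind': t => H ts IH /dvalidE [hH vts].
change (hdec kb (dheight (DNode H ts)) [set: gV (pg H)]).
case: ts IH hH vts => [|t ts] IH hH vts; first by rewrite /= cardsT.
have [m [-> hm]] := dheight_node H t ts; case: hH => R /iso_sym isoH.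
apply: hdec_iso isoH _; apply: pprodn_hdec => // H' inH.
have [t' t'ts ->] := In_map inH.
exact: hdec_le (hm t' t'ts) (IH t' t'ts (vts t' t'ts)).
Qed.

Lemma wd_hdec n G k : wd_le n G k -> hdec k n [set: gV G].
Proof.
case=> k' [le [t [[vt isot] ht]]].
by apply: hdec_le ht _; apply: hdec_iso isot _; apply: tree_hdec.
Qed.

Section Parts.
Variables (G : graph) (kb : nat).
Local Notation V := (gV G).

Definition rep_index (idx : V -> V) (S : {set V}) :=
  forall x, x \in S -> idx x \in S /\ idx (idx x) = idx x.

Definition part (idx : V -> V) (S : {set V}) (r : V) := [set y in S | idx y == r].

Lemma partP (idx : V -> V) (S : {set V}) r y : reflect (y \in S /\ idx y = r) (y \in part idx S r).
Proof. by rewrite inE; apply: (iffP andP) => -[? /eqP]. Qed.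

Lemma rep_in_part (idx : V -> V) (S : {set V}) x :
  rep_index idx S -> x \in S -> idx x \in part idx S (idx x).
Proof. by move=> rep /rep [iS ii]; apply/partP. Qed.

Lemma exists_rep_index (T : eqType) (idx : V -> T) (S : {set V}) :
  exists idx' : V -> V, rep_index idx' S /\
    forall x y, x \in S -> y \in S -> (idx' x == idx' y) = (idx x == idx y).
Proof.
pose f x := odflt x [pick y in S | idx y == idx x].
have fP x : x \in S ->
    [/\ [pick y in S | idx y == idx x] = Some (f x), f x \in S & idx (f x) = idx x].
  move=> xS; rewrite /f; case: pickP => [y /andP[yS /eqP e] //|/(_ x)].
  by rewrite xS eqxx.
exists f; split=> [x /fP [px fS fe]|x y /fP [px _ ex] /fP [py _ ey]].
  by split=> //; rewrite {1}/f fe px.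
apply/eqP/eqP => [e|e]; first by rewrite -ex -ey e.
by move: px; rewrite e py => -[].
Qed.

Lemma hdec_split h (S : {set V}) (idx0 : V -> nat) lab R :
  labelled_cut idx0 lab R S -> (forall x, x \in S -> hdec kb h (block idx0 S x)) ->
  exists idx : V -> V, [/\ rep_index idx S, labelled_cut idx lab R S &
    forall r, r \in idx @: S -> hdec kb h (part idx S r)].
Proof.
move=> cut0 hb; have [idx [rep same]] := exists_rep_index idx0 S.
exists idx; split=> // [x y xS yS|_ /imsetP [x xS ->]]; first by rewrite same //; apply: cut0.
congr (hdec _ _ _): (hb x xS); apply/setP => y; rewrite !inE.
by case: (boolP (y \in S)) => //= yS; rewrite same.
Qed.

Lemma card_parts (idx : V -> V) (S : {set V}) b :
  (forall r, r \in idx @: S -> #|part idx S r| <= b) -> #|S| <= #|idx @: S| * b.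
Proof.
move=> hb; rewrite -sum1_card (partition_big_imset idx) /= -sum_nat_const.
apply: leq_sum => r rS; apply: leq_trans (hb r rS); rewrite -sum1_card.
by apply: eq_leq; apply: eq_bigl => y; rewrite inE.
Qed.

End Parts.

Section Automorphisms.
Variables (G : graph) (kb : nat).
Local Notation V := (gV G).

Definition coloured_aut (T : finType) (c : V -> T) (S : {set V}) (s : V -> V) :=
  [/\ injective s, forall x, x \notin S -> s x = x, forall x, x \in S -> s x \in S,
      forall x, c (s x) = c x & forall x y, x \in S -> y \in S -> gE (s x) (s y) = gE x y].

Lemma labelled_cut_edges (idx : V -> V) lab R (S : {set V}) (s : V -> V) :
  labelled_cut idx lab R S ->
  (forall x, x \in S -> s x \in S) -> (forall x, x \in S -> lab (s x) = lab x) ->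
  (forall x y, x \in S -> y \in S -> idx x != idx y -> idx (s x) != idx (s y)) ->
  (forall x y, x \in S -> y \in S -> idx x = idx y -> gE (s x) (s y) = gE x y) ->
  forall x y, x \in S -> y \in S -> gE (s x) (s y) = gE x y.
Proof.
move=> cut sS sl si se x y xS yS; case: (idx x =P idx y) => [|/eqP e]; first exact: se.
by rewrite (cut _ _ (sS _ xS) (sS _ yS) (si _ _ xS yS e)) (cut _ _ xS yS e) !sl.
Qed.

Definition refine (T : finType) (c : V -> T) (lab : V -> nat) (x : V) : T * 'I_kb.+1 :=
  (c x, inord (lab x)).

Lemma refine_lab (T : finType) (c : V -> T) (lab : V -> nat) x y : lab x < kb -> lab y < kb ->
  refine c lab x = refine c lab y -> lab x = lab y.
Proof.
move=> /ltnW lx /ltnW ly [_ /(congr1 (@nat_of_ord _))].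
by rewrite !inordK.
Qed.

Definition part_match (T' : finType) (c' : V -> T') (B1 B2 : {set V}) (f g : V -> V) :=
  (forall x, x \in B1 -> [/\ f x \in B2, g (f x) = x & c' (f x) = c' x]) /\
  (forall x y, x \in B1 -> y \in B1 -> gE (f x) (f y) = gE x y).

Section LabelledCut.
Variables (T : finType) (c : V -> T) (idx : V -> V) (lab : V -> nat).
Variables (R : nat -> nat -> bool) (S : {set V}).
Hypothesis lab_lt : forall x, x \in S -> lab x < kb.
Hypothesis cut : labelled_cut idx lab R S.

Lemma lift_part_aut r s : coloured_aut (refine c lab) (part idx S r) s -> coloured_aut c S s.
Proof.
case=> sinj sout sin sc sE.
have sP y : y \in S -> s y \in S /\ idx (s y) = idx y.
  move=> yS; case: (boolP (y \in part idx S r)) => yB; last by rewrite sout.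
  by have [? ->] := partP _ _ _ _ (sin _ yB); have [_ ->] := partP _ _ _ _ yB.
split=> // [y yS|y /sP [] //|y|].
- by apply: sout; apply: contra yS => /partP [].
- exact: (congr1 fst (sc y)).
apply: (labelled_cut_edges cut) => [y /sP []|y yS|y z yS zS|y z yS zS e] //.
- by apply: refine_lab (sc y); rewrite lab_lt // (sP _ yS).1.
- by rewrite !(sP _ _).2.
case: (boolP (y \in part idx S r)) => yB; last first.
  by rewrite !sout //; apply: contra yB => /partP [_ <-]; apply/partP.
by apply: sE => //; apply/partP; split=> //; rewrite -e; case/partP: yB.
Qed.

Section Swap.
Variables (r1 r2 : V) (f g : V -> V).
Hypothesis ne : r1 != r2.
Let B1 := part idx S r1.
Let B2 := part idx S r2.
Hypothesis match12 : part_match (refine c lab) B1 B2 f g.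
Hypothesis match21 : part_match (refine c lab) B2 B1 g f.

Definition swap_map x := if x \in B1 then f x else if x \in B2 then g x else x.

Definition swap_rep r := if r == r1 then r2 else if r == r2 then r1 else r.

Lemma swap_rep_invol : involutive swap_rep.
Proof.
move=> r; rewrite /swap_rep; case: (r =P r1) => [->|/eqP n1].
  by rewrite eq_sym (negbTE ne) eqxx.
by case: (r =P r2) => [->|/eqP n2]; rewrite ?eqxx // (negbTE n1) (negbTE n2).
Qed.

Lemma parts_disjoint x : x \in B1 -> x \notin B2.
Proof. by case/partP=> _ e; apply/negP => /partP [_ e']; move: ne; rewrite -e -e' eqxx. Qed.

Lemma swap_map1 x : x \in B1 -> swap_map x = f x.
Proof. by rewrite /swap_map => ->. Qed.

Lemma swap_map2 x : x \in B2 -> swap_map x = g x.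
Proof. by move=> xB; rewrite /swap_map ifN ?xB //; apply: contraL xB; apply: parts_disjoint. Qed.

Lemma swap_map_out x : x \notin B1 -> x \notin B2 -> swap_map x = x.
Proof. by rewrite /swap_map => /negbTE -> /negbTE ->. Qed.

Lemma swap_map_invol : involutive swap_map.
Proof.
have [m12 _] := match12; have [m21 _] := match21.
move=> x; case: (boolP (x \in B1)) => x1.
  by have [fB fK _] := m12 x x1; rewrite (swap_map1 x1) swap_map2.
case: (boolP (x \in B2)) => x2; last by rewrite !swap_map_out.
by have [gB gK _] := m21 x x2; rewrite (swap_map2 x2) swap_map1.
Qed.

Lemma swap_mapP x : x \in S -> [/\ swap_map x \in S, idx (swap_map x) = swap_rep (idx x)
  & refine c lab (swap_map x) = refine c lab x].
Proof.
have [m12 _] := match12; have [m21 _] := match21.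
move=> xS; case: (boolP (x \in B1)) => x1.
  have [/partP [fS fe] _ fc] := m12 x x1; case/partP: (x1) => _ xe.
  by rewrite swap_map1 // fe xe /swap_rep eqxx.
case: (boolP (x \in B2)) => x2.
  have [/partP [gS ge] _ gc] := m21 x x2; case/partP: (x2) => _ xe.
  by rewrite swap_map2 // ge xe /swap_rep eq_sym (negbTE ne) eqxx.
rewrite swap_map_out // /swap_rep; move: x1 x2; rewrite !inE xS /= => /negbTE -> /negbTE ->.
by split.
Qed.

Lemma swap_map_edge x y : x \in S -> y \in S -> idx x = idx y ->
  gE (swap_map x) (swap_map y) = gE x y.
Proof.
have [_ g12] := match12; have [_ g21] := match21.
move=> xS yS e; case: (boolP (x \in B1)) => x1.
  have y1 : y \in B1 by apply/partP; split=> //; rewrite -e; case/partP: x1.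
  by rewrite !swap_map1 // g12.
case: (boolP (x \in B2)) => x2.
  have y2 : y \in B2 by apply/partP; split=> //; rewrite -e; case/partP: x2.
  by rewrite !swap_map2 // g21.
have y1 : y \notin B1 by move: x1; rewrite !inE xS yS e.
have y2 : y \notin B2 by move: x2; rewrite !inE xS yS e.
by rewrite !swap_map_out.
Qed.

Lemma swap_parts_aut : coloured_aut c S swap_map.
Proof.
have outS x : x \notin S -> swap_map x = x.
  by move=> xS; rewrite swap_map_out //; apply: contra xS => /partP [].
split=> [|x /outS //|x /swap_mapP [] //|x|].
- exact: can_inj swap_map_invol.
- by case: (boolP (x \in S)) => [/swap_mapP [_ _ /(congr1 fst)] //|/outS ->].
apply: (labelled_cut_edges cut) => [x /swap_mapP []|x xS|x y xS yS|] //.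
- by have [sS _ /(refine_lab (lab_lt sS) (lab_lt xS))] := swap_mapP xS.
- have [_ -> _] := swap_mapP xS; have [_ -> _] := swap_mapP yS.
  by rewrite (inj_eq (can_inj swap_rep_invol)).
exact: swap_map_edge.
Qed.

Lemma swap_map_moves x : x \in B1 -> swap_map x != x.
Proof.
have [m12 _] := match12; move=> xB; rewrite swap_map1 //.
by have [fB2 _ _] := m12 x xB; apply: contraTneq fB2 => ->; apply: parts_disjoint.
Qed.

End Swap.

End LabelledCut.

Definition transfer (B1 B2 : {set V}) (d : V) (x : V) := nth d (enum B2) (index x (enum B1)).

(** A vertex set of size at most [b], coloured by [c'], is described up to
    isomorphism by the colours and adjacencies along its enumeration. *)
Definition part_code (T : finType) (c' : V -> T) b (B : {set V}) (d : V) :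
    {ffun 'I_b -> option T} * {ffun 'I_b * 'I_b -> bool} :=
  ([ffun i : 'I_b => if i < #|B| then Some (c' (nth d (enum B) i)) else None],
   [ffun p : 'I_b * 'I_b => gE (nth d (enum B) p.1) (nth d (enum B) p.2)]).

Lemma part_code_match (T : finType) (c' : V -> T) b (B1 B2 : {set V}) d1 d2 :
  #|B1| <= b -> #|B2| <= b -> part_code c' b B1 d1 = part_code c' b B2 d2 ->
  part_match c' B1 B2 (transfer B1 B2 d2) (transfer B2 B1 d1).
Proof.
move=> B1b B2b [ecol eadj].
have ec i := congr1 (fun F : {ffun 'I_b -> option T} => F i) ecol.
have ea i j := congr1 (fun F : {ffun 'I_b * 'I_b -> bool} => F (i, j)) eadj.
have sz : #|B1| = #|B2|.
  case: (ltngtP #|B1| #|B2|) => // lt.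
    by have := ec (Ordinal (leq_trans lt B2b)); rewrite !ffunE /= ltnn lt.
  by have := ec (Ordinal (leq_trans lt B1b)); rewrite !ffunE /= ltnn lt.
have ix x : x \in B1 -> index x (enum B1) < #|B1| by rewrite cardE index_mem mem_enum.
have ixb x (xB : x \in B1) : index x (enum B1) < b := leq_trans (ix x xB) B1b.
split=> [x xB|x y xB yB]; last first.
  by have := ea (Ordinal (ixb x xB)) (Ordinal (ixb y yB)); rewrite !ffunE /= !nth_index ?mem_enum.
split; rewrite /transfer.
- by rewrite -mem_enum mem_nth // -cardE -sz ix.
- by rewrite index_uniq ?enum_uniq -?cardE -?sz ?ix // nth_index ?mem_enum.
- have := ec (Ordinal (ixb x xB)); rewrite !ffunE /= -sz ix // nth_index ?mem_enum //.
  by case.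
Qed.

(** Bound on the size of [h]-decomposable sets coloured with [t] colours that
    have no non-trivial colour-preserving automorphism: parts are bounded by
    induction (with the colours refined by the [kb] labels), and distinct
    parts have distinct codes. *)
Fixpoint rigid_bound h t := match h with
  | 0 => 1
  | h'.+1 => let b := rigid_bound h' (t * kb.+1) in (t * kb.+1).+1 ^ b * 2 ^ (b * b) * b
  end.

Lemma rigid_bound_pos h t : 0 < rigid_bound h t.
Proof. by elim: h t => //= h IH t; rewrite !muln_gt0 !expn_gt0 IH. Qed.

(** Either [S] is small, or it has a non-trivial automorphism preserving [c]:
    a part exceeding the bound has one by induction, which extends to [S];
    otherwise, as long as the codes of the parts are distinct, there are few
    parts, and two parts with the same code can be swapped. *)
Lemma small_or_coloured_aut h : forall (T : finType) (c : V -> T) (S : {set V}),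
  hdec kb h S ->
  #|S| <= rigid_bound h #|T| \/ exists s, coloured_aut c S s /\ exists x, s x != x.
Proof.
elim: h => [|h IH] T c S; first by move=> /= ->; left.
case=> [->|[idx0 [lab [R [lab_lt cut0 hb]]]]]; first by left; apply: rigid_bound_pos.
have [idx [rep cut hpart]] := hdec_split cut0 hb.
set b := rigid_bound h (#|T| * kb.+1).
have card_T' : #|{: T * 'I_kb.+1}| = #|T| * kb.+1 by rewrite card_prod card_ord.
case: (boolP [exists r in idx @: S, b < #|part idx S r|]) => [|small].
  case/exists_inP => r rS big; case: (IH _ (refine c lab) _ (hpart r rS)) => [|[s [aut ns]]].
    by rewrite card_T' leqNgt big.
  by right; exists s; split=> //; exact: (lift_part_aut lab_lt cut aut).
have part_le r : r \in idx @: S -> #|part idx S r| <= b.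
  by move=> rS; rewrite leqNgt; apply: contra small => big; apply/exists_inP; exists r.
pose code r := part_code (refine c lab) b (part idx S r) r.
case: (boolP [forall r1 in idx @: S, forall r2 in idx @: S, (code r1 == code r2) ==> (r1 == r2)]).
  move=> /forall_inP code_inj; left.
  have injc : {in idx @: S &, injective code}.
    move=> r1 r2 h1 h2 e; apply/eqP.
    by move/forall_inP: (code_inj r1 h1) => /(_ r2 h2)/implyP; apply; rewrite e.
  apply: leq_trans (card_parts part_le) _.
  rewrite [rigid_bound _ _]/= -/b leq_mul2r -(card_in_imset injc).
  apply/orP; right; apply: leq_trans (max_card _) _.
  by rewrite card_prod !card_ffun card_option card_T' card_bool card_prod !card_ord.
case/forall_inPn => r1 r1S /forall_inPn [r2 r2S]; rewrite negb_imply => /andP [/eqP e ne].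
have r1P : r1 \in part idx S r1 by case/imsetP: r1S => x xS ->; apply: rep_in_part.
have [r1_le r2_le] := (part_le r1 r1S, part_le r2 r2S).
have match12 := part_code_match r1_le r2_le e.
have match21 := part_code_match r2_le r1_le (esym e).
right; eexists; split; first exact: (swap_parts_aut lab_lt cut ne match12 match21).
by exists r1; apply: (swap_map_moves ne match12 r1P).
Qed.

End Automorphisms.

Fixpoint set_bound (f : mso) : nat :=
  match f with
  | MEdge _ _ | MEq _ _ => 0
  | MIn _ j => j.+1
  | MNot f | MEx1 _ f => set_bound f
  | MAnd f g => maxn (set_bound f) (set_bound g)
  | MEx2 j f => maxn j.+1 (set_bound f)
  end.

Lemma sat_set_bound G f : forall v1 (v2 v2' : nat -> {set gV G}),
  (forall j, j < set_bound f -> v2 j = v2' j) -> sat f v1 v2 <-> sat f v1 v2'.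
Proof.
elim: f => [i j|i j|i j|f IH|f IHf g IHg|i f IH|j f IH] v1 v2 v2' e /=.
- by [].
- by [].
- by rewrite e.
- by rewrite (IH v1 v2 v2').
- rewrite (IHf v1 v2 v2') ?(IHg v1 v2 v2') // => l lt; apply: e;
    by rewrite leq_max lt ?orbT.
- by split=> -[a h]; exists a; move: h; rewrite (IH _ v2 v2').
- have e' A l : l < set_bound f ->
      (if l == j then A else v2 l) = (if l == j then A else v2' l).
    by move=> lt; case: eqP => // _; apply: e; rewrite leq_max lt orbT.
  by split=> -[A h]; exists A; move: h; rewrite (IH _ _ _ (e' A)).
Qed.

Lemma sat_aut G f (s : gV G -> gV G) : bijective s -> (forall x y, gE (s x) (s y) = gE x y) ->
  forall v1 v2, sat f v1 v2 <-> sat f (fun i => s (v1 i)) (fun j => s @: v2 j).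
Proof.
move=> [g sK gK] sE; have sinj : injective s := can_inj sK.
have upd1 (v1 : nat -> gV G) a (i : nat) :
  (fun l => s (if l == i then a else v1 l)) = (fun l => if l == i then s a else s (v1 l)).
  by apply: functional_extensionality => l; case: eqP.
have upd2 (v2 : nat -> {set gV G}) A j :
  (fun l => s @: (if l == j then A else v2 l)) = (fun l => if l == j then s @: A else s @: v2 l).
  by apply: functional_extensionality => l; case: eqP.
have gsK (A : {set gV G}) : s @: (g @: A) = A.
  by rewrite -imset_comp (eq_imset _ gK) imset_id.
elim: f => [i j|i j|i j|f IH|f IHf g' IHg|i f IH|j f IH] v1 v2 /=.
- by rewrite sE.
- by split=> [->|/sinj].
- by rewrite mem_imset.
- by rewrite IH.
- by rewrite IHf IHg.
- split=> -[a h]; first by exists (s a); rewrite -upd1 -IH.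
  by exists (g a); apply/IH; rewrite upd1 gK.
- split=> -[A h]; first by exists (s @: A); rewrite -upd2 -IH.
  by exists (g @: A); apply/IH; rewrite upd2 gsK.
Qed.

Lemma order_preserving_id (T : finType) (r : T -> T -> Prop) (s : T -> T) :
  linear_order r -> injective s -> (forall a b, r (s a) (s b) <-> r a b) -> forall a, s a = a.
Proof.
case=> refl anti trans total sinj sr.
have [g sK gK] := injF_bij sinj.
pose below a := [set b | if excluded_middle_informative (r b a) then true else false].
have belowP a b : reflect (r b a) (b \in below a).
  by rewrite inE; case: excluded_middle_informative => h; constructor.
have below_s a : below (s a) = s @: below a.
  apply/setP => b; apply/belowP/imsetP => [h|[b' /belowP h ->]]; last exact/sr.
  by exists (g b); rewrite ?gK //; apply/belowP; rewrite -sr gK.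
have eq_below a b : r a b -> #|below a| = #|below b| -> a = b.
  move=> rab e; have sub : below a \subset below b.
    by apply/subsetP => z /belowP rza; apply/belowP; apply: trans rab.
  have /eqP eab : below a == below b by rewrite eqEcard sub e leqnn.
  by apply: anti rab _; apply/belowP; rewrite eab; apply/belowP.
move=> a; have card_s : #|below (s a)| = #|below a| by rewrite below_s card_imset.
by case: (total a (s a)) => h; [apply/esym/eq_below | apply: eq_below].
Qed.

Lemma definable_order_rigid G (phi : mso) (P : nat -> {set gV G}) (s : gV G -> gV G) :
  linear_order (fun a b => sat phi (fun i => if i == 0 then a else b) P) ->
  injective s -> (forall x y, gE (s x) (s y) = gE x y) ->
  (forall j x, j < set_bound phi -> (s x \in P j) = (x \in P j)) ->
  forall x, s x = x.
Proof.
move=> ord sinj sE sP; have bs := injF_bij sinj; apply: order_preserving_id ord sinj _ => a b.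
have sPj j : j < set_bound phi -> s @: P j = P j.
  move=> lt; have [g sK gK] := bs; apply/setP => y; apply/imsetP/idP => [[z zP ->]|yP].
    by rewrite sP.
  by exists (g y); rewrite ?gK // -sP // gK.
rewrite [X in _ <-> X](sat_aut phi bs sE).
have -> : (fun i => s (if i == 0 then a else b)) = (fun i => if i == 0 then s a else s b).
  by apply: functional_extensionality => i; case: eqP.
by apply: sat_set_bound => j /sPj.
Qed.

(** (1) -> (4): colour each vertex by its membership in the parameter sets of
    the order.  An ordered graph has no non-trivial automorphism preserving
    these colours, so its size is bounded by [rigid_bound]. *)
Lemma mso_finite n k C :
  (forall G, C G -> wd_le n G k) -> mso_orderable C -> finite_upto_iso C.
Proof.
move=> Hwd [phi Hphi]; pose M := set_bound phi.
apply: (@bounded_size_finite _ (rigid_bound k n #|{ffun 'I_M -> bool}|)) => G CG.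
case: (posnP #|gV G|) => [->|pos] //; have [P ord] := Hphi G CG pos.
pose c (x : gV G) := [ffun j : 'I_M => x \in P j].
have [|[s [[sinj _ _ sc sE] [x /eqP moved]]]] := small_or_coloured_aut c (wd_hdec (Hwd G CG)).
  by rewrite cardsT.
exfalso; apply: moved; apply: (definable_order_rigid ord sinj) => [y z|j y lt].
  by apply: sE; rewrite inE.
by have := congr1 (fun f : {ffun 'I_M -> bool} => f (Ordinal lt)) (sc y); rewrite !ffunE.
Qed.

Section InnerCuts.
Variables (G : graph) (kb : nat).
Local Notation V := (gV G).

Definition cut_in (S : {set V}) K q :=
  exists (idx : V -> V) (lab : V -> nat) (R : nat -> nat -> bool),
    [/\ rep_index idx S, forall x, x \in S -> lab x < K, labelled_cut idx lab R S
      & q <= #|idx @: S|].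

Lemma cut_in_one (S : {set V}) K x : x \in S -> 0 < K -> cut_in S K 1.
Proof.
move=> xS K0; exists (fun _ => x), (fun _ => 0), (fun _ _ => false); split=> //.
- by move=> y z _ _; rewrite eqxx.
- by apply/card_gt0P; exists x; apply/imsetP; exists x.
Qed.

(** Label budget for cuts found [h] levels down a decomposition. *)
Fixpoint label_budget h := if h is h'.+1 then (label_budget h').+1 * kb.+1 else 1.

(** A cut of one part of a labelled cut refines to a cut of the whole set with
    at least as many parts: vertices of that part get the label
    [(lab1 x).+1 * kb.+1 + lab0 x], the others keep [lab0 x]. *)
Lemma cut_in_part (S : {set V}) idx0 lab0 R0 K r q : rep_index idx0 S ->
  (forall x, x \in S -> lab0 x < kb.+1) -> labelled_cut idx0 lab0 R0 S ->
  r \in idx0 @: S -> cut_in (part idx0 S r) K q -> cut_in S (K.+1 * kb.+1) q.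
Proof.
move=> rep0 lab0_lt cut0 rS [idx1 [lab1 [R1 [rep1 lab1_lt cut1 q_le]]]].
set B := part idx0 S r.
have outB x : x \in S -> x \notin B -> idx0 x != r by move=> xS; rewrite inE xS.
pose idx x := if x \in B then idx1 x else idx0 x.
pose lab x := if x \in B then (lab1 x).+1 * kb.+1 + lab0 x else lab0 x.
pose R a b := if (0 < a %/ kb.+1) && (0 < b %/ kb.+1)
              then R1 (a %/ kb.+1).-1 (b %/ kb.+1).-1 else R0 (a %% kb.+1) (b %% kb.+1).
have labE x : x \in S ->
    lab x %/ kb.+1 = (if x \in B then (lab1 x).+1 else 0) /\ lab x %% kb.+1 = lab0 x.
  move=> xS; have l0 := lab0_lt x xS; rewrite /lab.
  by case: (x \in B); rewrite ?divnMDl ?modnMDl ?divn_small ?modn_small ?addn0.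
have RE x y : x \in S -> y \in S -> R (lab x) (lab y) =
    if (x \in B) && (y \in B) then R1 (lab1 x) (lab1 y) else R0 (lab0 x) (lab0 y).
  move=> xS yS; have [dx mx] := labE x xS; have [dy my] := labE y yS.
  by rewrite /R dx dy mx my; case: (x \in B); case: (y \in B).
exists idx, lab, R; split.
- move=> x xS; rewrite /idx; case: (boolP (x \in B)) => xB.
    by have [iB ii] := rep1 x xB; rewrite iB ii; case/partP: iB.
  have [iS ii] := rep0 x xS; suff -> : (idx0 x \in B) = false by [].
  by apply/negbTE/partP => -[_ e]; move: (outB x xS xB); rewrite -e ii eqxx.
- move=> x xS; have l0 := lab0_lt x xS; rewrite /lab; case: ifP => xB; last by nia.
  by have l1 := lab1_lt x xB; nia.
- move=> x y xS yS; rewrite /idx !RE //.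
  case: (boolP (x \in B)) => xB; case: (boolP (y \in B)) => yB /= ne.
  + exact: cut1 xB yB ne.
  + by apply: cut0 => //; case/partP: xB => _ ->; rewrite eq_sym outB.
  + by apply: cut0 => //; case/partP: yB => _ ->; rewrite outB.
  + exact: cut0 xS yS ne.
- apply: leq_trans q_le (subset_leq_card _); apply/subsetP => _ /imsetP [x xB ->].
  by apply/imsetP; exists x; [case/partP: xB | rewrite /idx xB].
Qed.

Lemma hdec_size_bound D h : forall S, hdec kb h S ->
  (forall q, cut_in S (label_budget h) q -> q <= D) -> #|S| <= D ^ h.
Proof.
elim: h => [|h IH] S; first by move=> /= ->.
case=> [e1|[idx0 [lab0 [R0 [lab0_lt cut0 hb]]]]] cut_le.
  have [x xS] : exists x, x \in S by apply/card_gt0P; rewrite e1.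
  by rewrite e1 expn_gt0 cut_le //; apply: cut_in_one xS _.
have [idx [rep cut hpart]] := hdec_split cut0 hb.
have lab0_lt' x : x \in S -> lab0 x < kb.+1 by move=> /lab0_lt /ltnW.
have parts_le : #|idx @: S| <= D.
  apply: cut_le; exists idx, lab0, R0; split=> // x /lab0_lt' lt.
  by apply: leq_trans lt _; rewrite /= leq_pmull.
have part_le r : r \in idx @: S -> #|part idx S r| <= D ^ h.
  move=> rS; apply: IH (hpart r rS) _ => q hq; apply: cut_le.
  exact: cut_in_part rep lab0_lt' cut rS hq.
by apply: leq_trans (card_parts part_le) _; rewrite expnS leq_mul2r parts_le orbT.
Qed.

End InnerCuts.

(** A labelled cut of the whole graph is a product of its parts. *)
Section CutProduct.
Variables (G : graph) (K : nat) (idx : gV G -> gV G) (lab : gV G -> nat).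
Variable (R : nat -> nat -> bool).
Hypothesis lab_lt : forall x, lab x < K.
Hypothesis cut : forall x y, idx x != idx y -> gE x y = R (lab x) (lab y) || R (lab y) (lab x).

Definition part_vertex (r : gV G) := {y : gV G | idx y == r}.
Definition part_rel (r : gV G) : rel (part_vertex r) := fun a b => gE (val a) (val b).
Lemma part_rel_sym r : symmetric (@part_rel r). Proof. by move=> a b; apply: gE_sym. Qed.
Lemma part_rel_irr r : irreflexive (@part_rel r). Proof. by move=> a; apply: gE_irr. Qed.
Definition part_pgraph (r : gV G) : pgraph K :=
  @PGraph K (Graph (@part_rel_sym r) (@part_rel_irr r)) (fun a => Ordinal (lab_lt (val a))).
Definition port_rel : rel 'I_K := fun a b => R a b.

Fixpoint unpart (rs : seq (gV G)) : gV (pg (pprodn port_rel (map part_pgraph rs))) -> gV G :=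
  match rs as rs0 return gV (pg (pprodn port_rel (map part_pgraph rs0))) -> gV G with
  | [::] => fun v : void => match v with end
  | r :: rs' => fun u : (gV (pg (part_pgraph r))
                         + gV (pg (pprodn port_rel (map part_pgraph rs'))))%type =>
      match u with inl a => val a | inr z => @unpart rs' z end
  end.

Lemma unpart_idx rs z : idx (@unpart rs z) \in rs.
Proof.
elim: rs z => [|r rs IH] /= z; first by case: z.
case: z => [a|z] /=; first by rewrite inE (eqP (valP a)) eqxx.
by rewrite inE IH orbT.
Qed.

Lemma unpart_lab rs z : nat_of_ord (plab z) = lab (@unpart rs z).
Proof. by elim: rs z => [|r rs IH] /= z; case: z. Qed.

Lemma unpart_inj rs : uniq rs -> injective (@unpart rs).
Proof.
elim: rs => [|r rs IH] /=; first by move=> _ [].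
case/andP => nr urs [a|z] [b|z'] //= e.
- by congr inl; apply: val_inj.
- by move: (unpart_idx z'); rewrite -e (eqP (valP a)) (negbTE nr).
- by move: (unpart_idx z); rewrite e (eqP (valP b)) (negbTE nr).
- by rewrite (IH urs _ _ e).
Qed.

Lemma unpart_edge rs : uniq rs -> forall u w, gE (@unpart rs u) (@unpart rs w) = gE u w.
Proof.
elim: rs => [|r rs IH] /=; first by move=> _ [].
case/andP => nr urs [a|z] [b|z'] //=; last exact: IH.
- rewrite cut /port_rel ?unpart_lab //; apply/eqP => e.
  by move: (unpart_idx z'); rewrite -e (eqP (valP a)) (negbTE nr).
- rewrite cut /port_rel ?unpart_lab //; apply/eqP => e.
  by move: (unpart_idx z); rewrite e (eqP (valP b)) (negbTE nr).
Qed.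

Lemma unpart_surj rs y : idx y \in rs -> exists z, @unpart rs z = y.
Proof.
elim: rs => [|r rs IH] //=; rewrite inE; case: (boolP (idx y == r)) => [e _|_ /= /IH [z ez]].
  by exists (inl (exist _ y e)).
by exists (inr z).
Qed.

End CutProduct.

Lemma cut_in_witness G K q : cut_in [set: gV G] K q -> exists2 p, q <= p & cut_witness G K p.
Proof.
case=> idx [lab [R [rep lab_lt cut q_le]]].
have lab_lt' x : lab x < K by apply: lab_lt; rewrite inE.
have cut' x y : idx x != idx y -> gE x y = R (lab x) (lab y) || R (lab y) (lab x).
  by apply: cut; rewrite inE.
pose rs := enum (idx @: [set: gV G]).
exists (size rs); first by rewrite -cardE.
exists (map (part_pgraph idx lab_lt') rs), (port_rel R); split.
- by rewrite size_map.
- apply/allP_In => H /In_map [r /In_mem]; rewrite mem_enum => /imsetP [x _ ->] ->.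
  have [_ ii] := rep x (in_setT x).
  by apply/card_gt0P; exists (exist (fun y => idx y == idx x) (idx x) (introT eqP ii)).
- pose f := @unpart G K idx lab R lab_lt' rs.
  apply: iso_sym; exists f; split; last exact: (unpart_edge (lab_lt := lab_lt') cut' (enum_uniq _)).
  apply: inj_card_bij; first exact: (unpart_inj (R := R) (lab_lt := lab_lt') (enum_uniq _)).
  have sub : [set: gV G] \subset f @: [set: _].
    apply/subsetP => y _; have [|z <-] := @unpart_surj G K idx lab R lab_lt' rs y.
      by rewrite mem_enum imset_f.
    exact: imset_f.
  rewrite -cardsT; apply: leq_trans (subset_leq_card sub) _.
  exact: leq_trans (leq_imset_card _ _) (max_card _).
Qed.

Lemma CUT_finite n k C : (forall G, C G -> wd_le n G k) -> has_CUT C -> finite_upto_iso C.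
Proof.
move=> Hwd [f Hf]; apply: (@bounded_size_finite _ (f (label_budget k n) ^ n)) => G CG.
rewrite -cardsT; apply: (hdec_size_bound (wd_hdec (Hwd G CG))) => q /cut_in_witness [p le cw].
exact: leq_trans le (Hf G CG _ _ cw).
Qed.

(** The cycle (1) -> (2) -> (3) -> (4) -> (1); the first two steps go through (4). *)
Theorem theorem5p22 (n k : nat) (C : graph_class) :
  (forall G, C G -> wd_le n G k) ->
  [<-> mso_orderable C; has_CUT C; bounded_outdeg_decomps n k C; finite_upto_iso C].
Proof.
move=> Hwd; tfae.
- by move=> /(mso_finite Hwd); apply: finite_CUT.
- by move=> /(CUT_finite Hwd); apply: finite_outdeg Hwd.
- exact: outdeg_finite.
- exact: finite_mso.
Qed.
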